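(* Let $n\ge 1$, $M\ge1$ be integers and $a=(a_0,\dots,a_n)\in\mathbb{Z}^{n+1}$ with $0\le a_i\le M$ and $a_0=a_n=0$. Let $G(a)$ be the directed graph defined below. Then all tropical recurrent minimal sequences with values in $V$ satisfying $a$ are periodic if and only if $G(a)$ is a disjoint union of simple cycles.
   Context: Let $V=\{j+i/(2n+2): 0\le j<M,\ 0\le i\le 2n+2,\ i,j\in\mathbb{Z}\}$ and $W=V^{2n+1}$. A vector $z=(z_0,\dots,z_N)\in\mathbb{R}^{N+1}$ satisfies $a$ and is minimal if for each $0\le k\le N-n$ the minimum $\min_{0\le i\le n}\{a_i+z_{i+k}\}$ is attained at least twice, and for each $n\le j\le N-n$ there exists $j-n\le k\le j$ with $a_{j-k}+z_j=\min_{0\le i\le n}\{a_i+z_{k+i}\}$. The directed graph $G_0$ has as vertices the elements $(z_0,\dots,z_{2n})\in W$ which (with $N=2n$) satisfy $a$ and are minimal, with an arrow from $(z_0,\dots,z_{2n})$ to $(z'_0,\dots,z'_{2n})$ iff $z_{i+1}=z'_i$ for $0\le i\le 2n-1$ (loops allowed). $G(a)$ is obtained from $G_0$ by successively removing vertices having no incoming arrow or no outgoing arrow, as long as possible. A tropical recurrent sequence is $y=(y_j)_{j\in\mathbb{Z}}$ with real entries; it satisfies $a$ if for every $k\in\mathbb{Z}$ the minimum $\min_{0\le i\le n}\{a_i+y_{i+k}\}$ is attained for at least two different $i$; it is minimal if for every $j$ there is $k$ with $j-n\le k\le j$ and $a_{j-k}+y_j=\min_{0\le i\le n}\{a_i+y_{i+k}\}$.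 It is periodic if there is $d\ge1$ with $y_{j+d}=y_j$ for all $j$. *)

From mathcomp Require Import all_boot all_order all_algebra.
Set Implicit Arguments. Unset Strict Implicit. Unset Printing Implicit Defensive.
Import Order.TTheory GRing.Theory Num.Theory.
Local Open Scope ring_scope.

Definition in_V (M n : nat) (x : rat) : Prop :=
  exists j i : nat, (j < M)%N /\ (i <= 2 * n + 2)%N /\
    x = j%:R + i%:R / (2 * n + 2)%:R.

Definition is_min_at (f : nat -> rat) (n d : nat) : Prop :=
  (d <= n)%N /\ forall i : nat, (i <= n)%N -> f d <= f i.

Definition min_twice (f : nat -> rat) (n : nat) : Prop :=
  exists i1 i2 : nat, i1 <> i2 /\ is_min_at f n i1 /\ is_min_at f n i2.

Definition fin_satisfies (a : nat -> int) (n N : nat) (z : seq rat) : Prop :=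
  forall k : nat, (k <= N - n)%N ->
    min_twice (fun i => (a i)%:~R + nth 0 z (i + k)) n.

(* for n <= j <= N-n there is k with j-n <= k <= j and
   a_{j-k} + z_j = min_i (a_i + z_{k+i});  we write d = j - k *)
Definition fin_minimal (a : nat -> int) (n N : nat) (z : seq rat) : Prop :=
  forall j : nat, (n <= j)%N -> (j <= N - n)%N ->
    exists d : nat, (d <= n)%N /\
      is_min_at (fun i => (a i)%:~R + nth 0 z ((j - d) + i)) n d.

Definition G0_vertex (M n : nat) (a : nat -> int) (z : seq rat) : Prop :=
  size z = (2 * n + 1)%N /\ (forall i, (i < size z)%N -> in_V M n (nth 0 z i)) /\
  fin_satisfies a n (2 * n) z /\ fin_minimal a n (2 * n) z.

Definition G0_arrow (n : nat) (z z' : seq rat) : Prop :=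
  forall i : nat, (i <= 2 * n - 1)%N -> nth 0 z i.+1 = nth 0 z' i.

(* successive removal of vertices with no incoming or no outgoing arrow:
   stage k+1 removes from stage k the vertices without an in- or out-arrow
   (arrows of the subgraph induced on stage k). *)
Fixpoint G_stage (M n : nat) (a : nat -> int) (k : nat) (z : seq rat) : Prop :=
  match k with
  | 0 => G0_vertex M n a z
  | k'.+1 => G_stage M n a k' z /\
      (exists w, G_stage M n a k' w /\ G0_arrow n w z) /\
      (exists w, G_stage M n a k' w /\ G0_arrow n z w)
  end.

(* vertices of G(a): those never removed (the process stabilizes since G_0 is finite);
   arrows of G(a) are the arrows of G_0 between vertices of G(a). *)
Definition Ga_vertex (M n : nat) (a : nat -> int) (z : seq rat) : Prop :=
  forall k : nat, G_stage M n a k z.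

(* a directed graph (vertex predicate Vx, arrow relation E) is a disjoint union of
   simple directed cycles (loops count as cycles of length 1) *)
Definition disjoint_union_simple_cycles (T : eqType) (Vx : T -> Prop)
    (E : T -> T -> Prop) : Prop :=
  exists cs : seq (seq T),
    (forall c, c \in cs -> c <> [::]) /\
    uniq (flatten cs) /\
    (forall v, Vx v <-> v \in flatten cs) /\
    (forall u v, Vx u -> Vx v ->
       (E u v <-> exists2 c, c \in cs &
          exists i : nat, (i < size c)%N /\ u = nth u c i /\
                          v = nth u c ((i.+1) %% size c)%N)).

Definition trop_satisfies (a : nat -> int) (n : nat) (y : int -> rat) : Prop :=
  forall k : int, min_twice (fun i => (a i)%:~R + y (k + i%:Z)) n.

(* for every j there is k, j-n <= k <= j, with a_{j-k} + y_j = min_i (a_i + y_{i+k});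
   we write d = j - k *)
Definition trop_minimal (a : nat -> int) (n : nat) (y : int -> rat) : Prop :=
  forall j : int, exists d : nat, (d <= n)%N /\
    is_min_at (fun i => (a i)%:~R + y ((j - d%:Z) + i%:Z)) n d.

Definition periodic (y : int -> rat) : Prop :=
  exists d : nat, (0 < d)%N /\ forall j : int, y (j + d%:Z) = y j.

From mathcomp Require Import all_boot all_order all_algebra zify ring.
From Stdlib Require Import ClassicalEpsilon.
Import Order.TTheory GRing.Theory Num.Theory.
Local Open Scope ring_scope.
Set Implicit Arguments. Unset Strict Implicit. Unset Printing Implicit Defensive.

(** An admissible sequence (values in V, satisfying a, minimal) is the same thing
    as a bi-infinite path in G_0, namely the path of its windows
    (y_j, ..., y_{j+2n}).  Such paths stay inside G(a); conversely, G_0 being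
    finite, every vertex of G(a) has a successor and a predecessor in G(a), so
    every arrow of G(a) lies on a bi-infinite path of G(a).

    If G(a) is a disjoint union of cycles, the window path of an admissible
    sequence runs around one of them, so the sequence is periodic.  If every
    admissible sequence is periodic, two paths of G(a) with a common past (or a
    common future) agree on a half-line and are periodic, hence coincide: every
    vertex of G(a) has exactly one successor and one predecessor in G(a), and the
    orbits of this injective successor map on a finite set are disjoint cycles. *)

(** * Disjoint unions of simple cycles *)

Lemma next_nth_mod (T : eqType) (c : seq T) x0 i : uniq c -> (i < size c)%N ->
  next c (nth x0 c i) = nth x0 c (i.+1 %% size c).
Proof.
case: c => // y c uc lt_i_c; rewrite next_nth mem_nth // index_uniq //=.
have [lt_i | le_c_i] := ltnP i (size c).
  by rewrite modn_small ?ltnS //= (set_nth_default x0).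
have -> : i = size c by move: lt_i_c => /= ?; lia.
by rewrite modnn nth_default.
Qed.

Lemma iter_size_fcycle (T : eqType) (f : T -> T) p x :
  fcycle f p -> x \in p -> iter (size p) f x = x.
Proof.
move=> fp /rot_to [i q rip].
have /fpathE qxE : fcycle f (x :: q) by rewrite -rip rot_cycle.
have -> : size p = size (rcons q x) by rewrite size_rcons -(size_rot i) rip.
by rewrite -last_traject -qxE last_rcons.
Qed.

Lemma mem_flatten_uniq (T : eqType) (cs : seq (seq T)) c :
  uniq (flatten cs) -> c \in cs -> uniq c.
Proof.
elim: cs => //= c0 cs IH; rewrite cat_uniq => /and3P [u0 _ ucs].
by rewrite inE => /predU1P [-> | /(IH ucs)].
Qed.

Lemma flatten_uniq_mem_eq (T : eqType) (cs : seq (seq T)) c c' x :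
  uniq (flatten cs) -> c \in cs -> c' \in cs -> x \in c -> x \in c' -> c = c'.
Proof.
elim: cs => //= c0 cs IH; rewrite cat_uniq => /and3P [_ /hasPn dis ucs].
have notin d : d \in cs -> x \in d -> x \notin c0.
  by move=> dcs xd; apply: dis; apply/flattenP; exists d.
rewrite !inE => /predU1P [-> | cs_c] /predU1P [-> | cs_c'] xc xc' //.
- by rewrite (negPf (notin c' cs_c' xc')) in xc.
- by rewrite (negPf (notin c cs_c xc)) in xc'.
- exact: IH.
Qed.

Lemma cycle_stepE (T : eqType) (c : seq T) u v : uniq c ->
  (exists i : nat, (i < size c)%N /\ u = nth u c i /\ v = nth u c (i.+1 %% size c))
  <-> u \in c /\ v = next c u.
Proof.
move=> uc; split.
  move=> [i [lt_i [eu ->]]]; rewrite -next_nth_mod // -eu.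
  by split=> //; rewrite eu mem_nth.
move=> [uc' ->]; exists (index u c); rewrite index_mem nth_index //.
by rewrite -next_nth_mod ?index_mem // nth_index.
Qed.

Lemma disjoint_union_simple_cyclesP (T : eqType) (Vx : T -> Prop) (E : T -> T -> Prop) :
  disjoint_union_simple_cycles Vx E <->
  exists cs : seq (seq T),
    [/\ forall c, c \in cs -> c <> [::], uniq (flatten cs),
        forall v, Vx v <-> v \in flatten cs &
        forall u v, Vx u -> Vx v ->
          (E u v <-> exists2 c, c \in cs & u \in c /\ v = next c u)].
Proof.
have stepE cs u v : uniq (flatten cs) ->
  (exists2 c, c \in cs & exists i : nat,
     (i < size c)%N /\ u = nth u c i /\ v = nth u c (i.+1 %% size c)) <->
  (exists2 c, c \in cs & u \in c /\ v = next c u).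
  move=> ucs; split=> -[c cs_c step]; exists c => //; apply/cycle_stepE => //;
  exact: mem_flatten_uniq ucs cs_c.
split=> -[cs hcs]; exists cs.
  case: hcs => [ne [ucs [Vcs Ecs]]]; split=> // u v Vu Vv.
  by rewrite Ecs // stepE.
case: hcs => ne ucs Vcs Ecs; do 3!split=> //; move=> u v Vu Vv.
by rewrite Ecs // stepE.
Qed.

Definition bipath (T : Type) (Vx : T -> Prop) (E : T -> T -> Prop) (P : int -> T) :=
  forall j, Vx (P j) /\ E (P j) (P (j + 1)).

Lemma simple_cycles_bipath_periodic (T : eqType) (Vx : T -> Prop) (E : T -> T -> Prop)
    (P : int -> T) :
  disjoint_union_simple_cycles Vx E -> bipath Vx E P ->
  exists2 d : nat, (0 < d)%N & forall j, P (j + d%:Z) = P j.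
Proof.
case/disjoint_union_simple_cyclesP=> cs [_ ucs Vcs Ecs] hP.
have step j : exists2 c, c \in cs & P j \in c /\ P (j + 1) = next c (P j).
  by apply/Ecs; [exact: (hP j).1 | exact: (hP (j + 1)).1 | exact: (hP j).2].
have /flattenP [c cs_c P0c] : P 0 \in flatten cs by apply/Vcs; exact: (hP 0).1.
have uc := mem_flatten_uniq ucs cs_c.
have same_cycle j : (P j \in c) = (P (j + 1) \in c).
  have [c' cs_c' [Pjc' e]] := step j.
  have Pj1c' : P (j + 1) \in c' by rewrite e mem_next.
  by apply/idP/idP=> Pc; rewrite (flatten_uniq_mem_eq ucs cs_c cs_c' Pc) ?Pjc'.
have Pc j : P j \in c.
  elim/int_rec: j => [//|m|m]; first by rewrite -addn1 PoszD -same_cycle.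
  by move=> IH; rewrite same_cycle (_ : - (m.+1 : int) + 1 = - (m : int)) //; lia.
have Pnext j : P (j + 1) = next c (P j).
  have [c' cs_c' [Pjc' ->]] := step j.
  by rewrite (flatten_uniq_mem_eq ucs cs_c' cs_c Pjc' (Pc j)).
have iterP j m : P (j + m%:Z) = iter m (next c) (P j).
  elim: m => [|m IH]; first by rewrite addr0.
  by rewrite iterS -IH -Pnext -addrA -PoszD addn1.
exists (size c) => [|j]; first by case: (c) P0c.
by rewrite iterP iter_size_fcycle ?Pc ?cycle_next.
Qed.

Lemma uniq_flatten_map (A B : eqType) (h : A -> seq B) (s : seq A) :
  uniq s -> (forall x, x \in s -> uniq (h x)) ->
  (forall x y z, x \in s -> y \in s -> z \in h x -> z \in h y -> x = y) ->
  uniq (flatten (map h s)).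
Proof.
elim: s => //= x s IH /andP [x_s us] uh dis; rewrite cat_uniq; apply/and3P; split.
- by apply: uh; rewrite mem_head.
- apply/hasP => -[z /flatten_mapP [y ys zy] zx].
  have exy : x = y by apply: (dis x y z) => //; rewrite inE ?eqxx ?ys ?orbT.
  by rewrite exy ys in x_s.
- apply: IH => // [y ys | y y' z ys ys']; [apply: uh | apply: dis];
  by rewrite inE ?ys ?ys' orbT.
Qed.

Section RootOrbits.

Variables (K : finType) (f : K -> K).
Hypothesis finj : injective f.

Definition root_orbits : seq (seq K) := [seq orbit f r | r <- enum (froots f)].

Lemma uniq_flatten_root_orbits : uniq (flatten root_orbits).
Proof.
apply: uniq_flatten_map => [||r r' z]; first exact: enum_uniq.
  by move=> r _; exact: orbit_uniq.
have fsym := fconnect_sym finj.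
rewrite !mem_enum => /eqP <- /eqP <-; rewrite -!fconnect_orbit => rz r'z.
apply/eqP; rewrite -(root_root fsym r) -(root_root fsym r') root_connect //.
by apply: connect_trans rz _; rewrite fsym.
Qed.

Lemma root_orbit_mem x : orbit f (froot f x) \in root_orbits /\ x \in orbit f (froot f x).
Proof.
have fsym := fconnect_sym finj; split; first by rewrite map_f // mem_enum; exact: roots_root.
by rewrite -fconnect_orbit fsym; exact: connect_root.
Qed.

Lemma next_root_orbits c x : c \in root_orbits -> x \in c -> next c x = f x.
Proof. by move=> /mapP [r _ ->] xr; rewrite (nextE (cycle_orbit finj r) xr). Qed.

End RootOrbits.

(* The cycles are the orbits of [g], a permutation of the finitely many vertices. *)
Lemma simple_cycles_of_bijection (T : choiceType) (Vx : T -> Prop)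
    (E : T -> T -> Prop) (S : seq T) (g : T -> T) :
  (forall v, Vx v -> v \in S) ->
  (forall v, Vx v -> Vx (g v) /\ E v (g v)) ->
  (forall u v, Vx u -> Vx v -> E u v -> v = g u) ->
  (forall u u', Vx u -> Vx u' -> g u = g u' -> u = u') ->
  disjoint_union_simple_cycles Vx E.
Proof.
move=> VxS hg Eg ginj.
pose inVx v := if excluded_middle_informative (Vx v) then true else false.
pose S' := [seq v <- S | inVx v].
have memS' v : Vx v <-> v \in S'.
  rewrite mem_filter /inVx; case: excluded_middle_informative => [Vv | nVv] /=.
    by rewrite VxS.
  by split.
have Vval (x : seq_sub S') : Vx (val x) by apply/memS'; exact: valP.
have gS' (x : seq_sub S') : g (val x) \in S' by apply/memS'; exact: (hg _ (Vval x)).1.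
pose f (x : seq_sub S') : seq_sub S' := SeqSub (gS' x).
have finj : injective f by move=> x y /(congr1 val) /(ginj _ _ (Vval x) (Vval y)) /val_inj.
have next_val c x : c \in root_orbits f -> x \in c -> next (map val c) (val x) = g (val x).
  move=> cf xc; rewrite (next_map val_inj) ?(next_root_orbits finj cf xc) //.
  exact: mem_flatten_uniq (uniq_flatten_root_orbits finj) cf.
apply/disjoint_union_simple_cyclesP; exists (map (map val) (root_orbits f)); split.
- move=> _ /mapP [_ /mapP [r _ ->] ->] /(congr1 size); rewrite size_map size_orbit.
  by have := order_gt0 f r; case: (order f r).
- by rewrite -map_flatten (map_inj_uniq val_inj) uniq_flatten_root_orbits.
- move=> v; split=> [/memS' S'v | /flattenP [_ /mapP [c _ ->] /mapP [x _ ->]]]; last exact: Vval.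
  pose x := SeqSub S'v; have [cf xc] := root_orbit_mem finj x.
  apply/flattenP; exists (map val (orbit f (froot f x))); last exact: (map_f val xc).
  by apply/mapP; exists (orbit f (froot f x)).
move=> u v Vu Vv; split=> [Euv | [_ /mapP [c cf ->] [/mapP [x xc ->] ->]]].
  have /memS' S'u := Vu; pose x := SeqSub S'u; have [cf xc] := root_orbit_mem finj x.
  exists (map val (orbit f (froot f x))); first by apply/mapP; exists (orbit f (froot f x)).
  by rewrite (Eg u v) // (_ : u = val x) // next_val //; split=> //; apply: map_f.
by rewrite next_val //; exact: (hg _ (Vval x)).2.
Qed.

Lemma choice_on (T : Type) (Vx : T -> Prop) (Q : T -> T -> Prop) :
  (forall v, Vx v -> exists w, Q v w) -> exists g : T -> T, forall v, Vx v -> Q v (g v).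
Proof.
move=> hQ; apply: (ClassicalEpsilon.choice (fun v w => Vx v -> Q v w)) => v.
have [/hQ [w Qw] | nVv] := classic (Vx v); first by exists w.
by exists v => /nVv.
Qed.

(* The path ..., h (h u), h u, u, w, g w, g (g w), ... with [u] at index 0;
   recall that [Negz m] is [-(m + 1)]. *)
Definition through (T : Type) (g h : T -> T) (u w : T) (j : int) : T :=
  match j with
  | Posz 0 => u
  | Posz m.+1 => iter m g w
  | Negz m => iter m.+1 h u
  end.

Lemma bipath_through (T : Type) (Vx : T -> Prop) (E : T -> T -> Prop) (g h : T -> T) u w :
  (forall v, Vx v -> Vx (g v) /\ E v (g v)) -> (forall v, Vx v -> Vx (h v) /\ E (h v) v) ->
  Vx u -> Vx w -> E u w -> bipath Vx E (through g h u w).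
Proof.
move=> hg hh Vu Vw Euw.
have Vg m : Vx (iter m g w) by elim: m => //= m /hg [].
have Vh m : Vx (iter m h u) by elim: m => //= m /hh [].
case=> [[|m] | [|m]] /=; first by [].
- by rewrite addn1; split=> //; exact: (hg _ (Vg m)).2.
- exact: hh.
- by rewrite subn1; exact: hh (Vh m.+1).
Qed.

(** * Periodic sequences *)

Lemma periodicMz (y : int -> rat) (d : int) : (forall t, y (t + d) = y t) ->
  forall (k : int) t, y (t + k * d) = y t.
Proof.
move=> hd; elim/int_rec=> [t | k IH t | k IH t]; first by rewrite mul0r addr0.
  by rewrite -[RHS]IH -[RHS]hd; congr y; ring.
by rewrite -[RHS]IH -[LHS]hd; congr y; ring.
Qed.

Lemma periodic_common (y y' : int -> rat) : periodic y -> periodic y' ->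
  exists2 D : nat, (0 < D)%N &
    forall (m : int) t, y (t + m * D%:Z) = y t /\ y' (t + m * D%:Z) = y' t.
Proof.
move=> [d [d_gt0 hd]] [d' [d'_gt0 hd']]; exists (d * d')%N; first by rewrite muln_gt0 d_gt0.
move=> m t; rewrite PoszM; split.
  by rewrite mulrA mulrAC (periodicMz hd).
by rewrite mulrA (periodicMz hd').
Qed.

Lemma eq_periodic_le (y y' : int -> rat) t0 : periodic y -> periodic y' ->
  (forall t, t <= t0 -> y t = y' t) -> y =1 y'.
Proof.
move=> py py' e t; have [D D_gt0 hD] := periodic_common py py'.
have [<- <-] := hD (- `|t - t0|%:Z) t; apply: e; nia.
Qed.

Lemma eq_periodic_ge (y y' : int -> rat) t0 : periodic y -> periodic y' ->
  (forall t, t0 <= t -> y t = y' t) -> y =1 y'.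
Proof.
move=> py py' e t; have [D D_gt0 hD] := periodic_common py py'.
have [<- <-] := hD `|t - t0|%:Z t; apply: e; nia.
Qed.

(** * Finiteness of G(a) *)

Definition V_values (M n : nat) : seq rat :=
  [seq j%:R + i%:R / (2 * n + 2)%:R | j <- iota 0 M, i <- iota 0 (2 * n + 3)].

Lemma in_V_values M n x : in_V M n x -> x \in V_values M n.
Proof.
move=> [j [i [lt_j [le_i ->]]]]; apply/allpairsP; exists (j, i).
by rewrite /= !mem_iota; split=> //; lia.
Qed.

Fixpoint words (T : Type) (L : seq T) (m : nat) : seq (seq T) :=
  if m is m'.+1 then [seq x :: w | x <- L, w <- words L m'] else [:: [::]].

Lemma mem_words (T : eqType) (L : seq T) w : all (mem L) w -> w \in words L (size w).
Proof.
elim: w => [|x w IH] /=; first by rewrite mem_seq1.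
by move=> /andP [Lx Lw]; apply/allpairsP; exists (x, w); split=> //; exact: IH.
Qed.

Lemma G0_vertex_words M n a z : G0_vertex M n a z -> z \in words (V_values M n) (2 * n + 1).
Proof.
move=> [<- [zV _]]; apply/mem_words/(all_nthP 0) => i lt_i.
exact/in_V_values/zV.
Qed.

Lemma antitone_common_witness (T : eqType) (L : seq T) (P : nat -> T -> Prop) :
  (forall k w, P k.+1 w -> P k w) -> (forall k, exists2 w, w \in L & P k w) ->
  exists2 w, w \in L & forall k, P k w.
Proof.
move=> anti ex; apply: NNPP => none.
have anti_le k k' w : (k <= k')%N -> P k' w -> P k w.
  by move/subnK <-; elim: (k' - k)%N => // i IH /anti /IH.
suff [K hK] : exists K, forall w, w \in L -> ~ P K w by have [w /hK] := ex K.
elim: L {ex} none => [|x L IH] none; first by exists 0%N.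
have [K1 hK1] : exists K, ~ P K x.
  by apply: not_all_ex_not => Px; apply: none; exists x; rewrite ?mem_head.
have [K2 hK2] : exists K, forall w, w \in L -> ~ P K w.
  by apply: IH => -[w Lw Pw]; apply: none; exists w; rewrite // inE Lw orbT.
exists (maxn K1 K2) => w /predU1P [-> | Lw] /anti_le Pw.
  by apply: hK1; apply: Pw; exact: leq_maxl.
by apply: (hK2 w Lw); apply: Pw; exact: leq_maxr.
Qed.

Lemma G_stage_antitone M n a k z : G_stage M n a k.+1 z -> G_stage M n a k z.
Proof. by case. Qed.

Lemma Ga_vertex_of_stages M n a (R : seq rat -> Prop) :
  (forall k, exists w, G_stage M n a k w /\ R w) -> exists w, Ga_vertex M n a w /\ R w.
Proof.
move=> ex; have [w _ hw] : exists2 w, w \in words (V_values M n) (2 * n + 1) &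
    forall k, G_stage M n a k w /\ R w.
  apply: antitone_common_witness => [k w [/G_stage_antitone] // | k].
  have [w [Gw Rw]] := ex k; exists w => //.
  apply: (@G0_vertex_words M n a).
  by elim: k w Gw {Rw} => [// | k IH w /G_stage_antitone /IH].
by exists w; split=> [k|]; [exact: (hw k).1 | exact: (hw 0%N).2].
Qed.

Lemma Ga_succ M n a v : Ga_vertex M n a v -> exists w, Ga_vertex M n a w /\ G0_arrow n v w.
Proof. by move=> Gv; apply: Ga_vertex_of_stages => k; have [_ [_]] := Gv k.+1. Qed.

Lemma Ga_pred M n a v : Ga_vertex M n a v -> exists w, Ga_vertex M n a w /\ G0_arrow n w v.
Proof. by move=> Gv; apply: Ga_vertex_of_stages => k; have [_ []] := Gv k.+1. Qed.

(** * Windows of a sequence *)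

Lemma is_min_at_ext (f g : nat -> rat) n d :
  (forall i, (i <= n)%N -> f i = g i) -> is_min_at f n d -> is_min_at g n d.
Proof. by move=> fg [le_d f_min]; split=> // i le_i; rewrite -!fg //; exact: f_min. Qed.

Lemma min_twice_ext (f g : nat -> rat) n :
  (forall i, (i <= n)%N -> f i = g i) -> min_twice f n -> min_twice g n.
Proof.
move=> fg [i1 [i2 [ne [min1 min2]]]]; exists i1, i2.
by split=> //; split; apply: is_min_at_ext fg _.
Qed.

Definition window (n : nat) (y : int -> rat) (j : int) : seq rat :=
  mkseq (fun i => y (j + i%:Z)) (2 * n + 1).

Lemma nth_window n y j i : (i < 2 * n + 1)%N -> nth 0 (window n y j) i = y (j + i%:Z).
Proof. exact: nth_mkseq. Qed.

Definition admissible (M n : nat) (a : nat -> int) (y : int -> rat) : Prop :=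
  [/\ forall j, in_V M n (y j), trop_satisfies a n y & trop_minimal a n y].

Lemma admissibleE M n a y :
  admissible M n a y <-> forall j, G0_vertex M n a (window n y j).
Proof.
split=> [[yV ysat ymin] j | yG0].
  split; first exact: size_mkseq.
  split; first by move=> i; rewrite size_mkseq => lt_i; rewrite nth_window.
  split=> [k le_k | j' le_j' le_j'2].
    apply: min_twice_ext (ysat (j + k%:Z)) => i le_i.
    rewrite nth_window; [congr (_ + y _); lia | lia].
  have [d [le_d d_min]] := ymin (j + n%:Z); exists d; split=> //.
  apply: is_min_at_ext d_min => i le_i.
  rewrite nth_window; [congr (_ + y _); lia | lia].
split=> [j | k | j].
- have [_ [zV _]] := yG0 j; move: (zV 0%N); rewrite size_mkseq nth_window ?addr0; last lia.
  by apply; lia.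
- have [_ [_ [zsat _]]] := yG0 k; apply: min_twice_ext (zsat 0%N (leq0n _)) => i le_i.
  rewrite nth_window; [congr (_ + y _); lia | lia].
have [_ [_ [_ zmin]]] := yG0 (j - n%:Z).
have [d [le_d d_min]] := zmin n (leqnn _) ltac:(lia); exists d; split=> //.
apply: is_min_at_ext d_min => i le_i.
rewrite nth_window; [congr (_ + y _); lia | lia].
Qed.

Lemma window_arrow n y j : (0 < n)%N -> G0_arrow n (window n y j) (window n y (j + 1)).
Proof. by move=> n_gt0 i le_i; rewrite !nth_window; [congr y; lia | lia | lia]. Qed.

Lemma Ga_bipath_window M n a y : (0 < n)%N -> admissible M n a y ->
  bipath (Ga_vertex M n a) (G0_arrow n) (window n y).
Proof.
move=> n_gt0 /admissibleE yG0 j; split=> [k|]; last exact: window_arrow.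
elim: k j => [// | k IH] j; split; first exact: IH.
split; [exists (window n y (j - 1)) | exists (window n y (j + 1))]; split=> //.
  by have := window_arrow y (j - 1) n_gt0; rewrite subrK.
exact: window_arrow.
Qed.

Definition heads (P : int -> seq rat) (t : int) : rat := nth 0 (P t) 0.

Lemma bipath_G0_window M n a P : bipath (G0_vertex M n a) (G0_arrow n) P ->
  P =1 window n (heads P).
Proof.
move=> hP.
have shift i j : (i <= 2 * n)%N -> nth 0 (P j) i = heads P (j + i%:Z).
  elim: i j => [|i IH] j le_i; first by rewrite addr0.
  by rewrite ((hP j).2 i) ?IH; [congr (heads P); lia | lia | lia].
move=> j; have [size_Pj _] := (hP j).1.
apply: (@eq_from_nth _ 0) => [|i]; rewrite size_Pj ?size_mkseq // => lt_i.
by rewrite nth_window // shift //; lia.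
Qed.

Section AllAdmissiblePeriodic.

Variables (M n : nat) (a : nat -> int).
Hypothesis all_periodic : forall y, admissible M n a y -> periodic y.

Lemma Ga_bipath_heads_periodic P : bipath (Ga_vertex M n a) (G0_arrow n) P ->
  periodic (heads P) /\ P =1 window n (heads P).
Proof.
move=> hP; have hP0 : bipath (G0_vertex M n a) (G0_arrow n) P.
  by move=> j; have [Gj Ej] := hP j; split=> //; exact: Gj 0%N.
have Pw := bipath_G0_window hP0; split=> //; apply/all_periodic/admissibleE => j.
by rewrite -Pw; exact: (hP0 j).1.
Qed.

Lemma Ga_succ_unique u w w' : Ga_vertex M n a u -> Ga_vertex M n a w ->
  Ga_vertex M n a w' -> G0_arrow n u w -> G0_arrow n u w' -> w = w'.
Proof.
move=> Gu Gw Gw' uw uw'.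
have [g hg] := choice_on (@Ga_succ M n a); have [h hh] := choice_on (@Ga_pred M n a).
have [pP eP] := Ga_bipath_heads_periodic (bipath_through hg hh Gu Gw uw).
have [pP' eP'] := Ga_bipath_heads_periodic (bipath_through hg hh Gu Gw' uw').
have e : heads (through g h u w) =1 heads (through g h u w').
  by apply: (eq_periodic_le (t0 := 0)) pP pP' _ => -[[|m] | m] //; rewrite lez_nat.
rewrite -[w]/(through g h u w 1) -[w']/(through g h u w' 1) eP eP'.
by apply: eq_mkseq => i; rewrite e.
Qed.

Lemma Ga_pred_unique v x x' : Ga_vertex M n a v -> Ga_vertex M n a x ->
  Ga_vertex M n a x' -> G0_arrow n x v -> G0_arrow n x' v -> x = x'.
Proof.
move=> Gv Gx Gx' xv x'v.
have [g hg] := choice_on (@Ga_succ M n a); have [h hh] := choice_on (@Ga_pred M n a).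
have [pP eP] := Ga_bipath_heads_periodic (bipath_through hg hh Gx Gv xv).
have [pP' eP'] := Ga_bipath_heads_periodic (bipath_through hg hh Gx' Gv x'v).
have e : heads (through g h x v) =1 heads (through g h x' v).
  by apply: (eq_periodic_ge (t0 := 1)) pP pP' _ => -[[|m] | m] //; rewrite lez_nat.
rewrite -[x]/(through g h x v 0) -[x']/(through g h x' v 0) eP eP'.
by apply: eq_mkseq => i; rewrite e.
Qed.

Lemma Ga_simple_cycles : disjoint_union_simple_cycles (Ga_vertex M n a) (G0_arrow n).
Proof.
have [g hg] := choice_on (@Ga_succ M n a).
apply: (@simple_cycles_of_bijection _ _ _ (words (V_values M n) (2 * n + 1)) g) => //.
- by move=> v Gv; apply: G0_vertex_words; exact: Gv 0%N.
- by move=> u v Gu Gv uv; have [Ggu ugu] := hg u Gu; exact: Ga_succ_unique uv ugu.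
move=> u u' Gu Gu' gu_gu'; have [Ggu ugu] := hg u Gu; have [_ u'gu'] := hg u' Gu'.
by apply: (Ga_pred_unique Ggu Gu Gu' ugu); rewrite gu_gu'.
Qed.

End AllAdmissiblePeriodic.

Lemma simple_cycles_admissible_periodic M n a y : (0 < n)%N ->
  disjoint_union_simple_cycles (Ga_vertex M n a) (G0_arrow n) -> admissible M n a y ->
  periodic y.
Proof.
move=> n_gt0 Ga_cycles /(Ga_bipath_window n_gt0) /(simple_cycles_bipath_periodic Ga_cycles).
move=> [d d_gt0 hd]; exists d; split=> // j.
by have := congr1 (nth 0 ^~ 0%N) (hd j); rewrite !nth_window ?addr0 ?addn1.
Qed.

Theorem lemma2 (n M : nat) (a : nat -> int) :
  (1 <= n)%N -> (1 <= M)%N ->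
  (forall i : nat, (i <= n)%N -> 0 <= a i <= M%:Z) ->
  a 0%N = 0 -> a n = 0 ->
  ((forall y : int -> rat,
      (forall j : int, in_V M n (y j)) ->
      trop_satisfies a n y -> trop_minimal a n y -> periodic y)
   <->
   disjoint_union_simple_cycles (Ga_vertex M n a) (G0_arrow n)).
Proof.
move=> n_gt0 _ _ _ _; split=> [all_periodic | Ga_cycles y yV ysat ymin].
  by apply: Ga_simple_cycles => y [yV ysat ymin]; exact: all_periodic.
by apply: simple_cycles_admissible_periodic Ga_cycles _.
Qed.
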